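(* Let $n = \sum_{i=1}^{k} n_i h_i$ and suppose a holey self-orthogonal latin square HSOLS$(h_1^{n_1}\cdots h_k^{n_k})$ of order $n$ exists. Suppose moreover that for each $i \in \{1,\dots,k\}$ there exist complete mixed doubles round robin tournaments CMDRR$(h_i, m_{i1}), \dots,$ CMDRR$(h_i, m_{i n_i})$. Then there exists a CMDRR$(n, s)$, where $s = \sum_{1 \le i \le k}\sum_{1 \le j \le n_i} m_{ij}$.
   Context: A mixed doubles game is a match between two teams, each team consisting of one man and one woman; in a game $M_a F_b$ v $M_c F_d$, $M_a$ and $F_b$ are partners, $M_c$ and $F_d$ are partners, and each player of one team opposes each player of the other team. A complete mixed doubles round robin tournament CMDRR$(n,k)$ is a schedule (set) of mixed doubles games for $n$ men and $n$ women, of which $k$ men and $k$ women are paired into $k$ spouse pairs (a spouse pair is one man and one woman), such that: spouses never play in a game together as partners or opponents; every man and woman who are not spouses are partners exactly once and opponents exactly once; each player who has a spouse opposes every other player of the same sex exactly once; each player who does not have a spouse opposes some other same-sex player who does not have a spouse exactly twice and opposes all other same-sex players exactly once. By convention a CMDRR$(1,1)$ exists (one spouse pair and no games). A self-orthogonal latin square (SOLS) is a latin square orthogonal to its transpose. A holey SOLS HSOLS$(h_1^{n_1}\cdots h_k^{n_k})$ is a self-orthogonal latin square of order $n=\sum n_i h_i$ with, for each $i$, $n_i$ missing sub-SOLS (holes) of order $h_i$, the holes being disjoint and spanning (i.e. the symbol set is partitioned into the holes, and the cells indexed by pairs of rows/columns from the same hole are empty and the symbols of a hole do not occur in that hole's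 rows or columns). *)

From mathcomp Require Import all_boot.
Set Implicit Arguments. Unset Strict Implicit. Unset Printing Implicit Defensive.

(* A game is a quadruple (a, b, c, d) standing for  M_a F_b  v  M_c F_d. *)
Definition game (n : nat) : finType := ('I_n * 'I_n * 'I_n * 'I_n)%type.
Definition gm1 n (g : game n) : 'I_n := g.1.1.1.
Definition gf1 n (g : game n) : 'I_n := g.1.1.2.
Definition gm2 n (g : game n) : 'I_n := g.1.2.
Definition gf2 n (g : game n) : 'I_n := g.2.

Definition partners n (g : game n) (a b : 'I_n) : bool :=
  ((gm1 g == a) && (gf1 g == b)) || ((gm2 g == a) && (gf2 g == b)).
Definition opp_mw n (g : game n) (a b : 'I_n) : bool :=
  ((gm1 g == a) && (gf2 g == b)) || ((gm2 g == a) && (gf1 g == b)).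
Definition opp_mm n (g : game n) (a a' : 'I_n) : bool :=
  ((gm1 g == a) && (gm2 g == a')) || ((gm2 g == a) && (gm1 g == a')).
Definition opp_ww n (g : game n) (b b' : 'I_n) : bool :=
  ((gf1 g == b) && (gf2 g == b')) || ((gf2 g == b) && (gf1 g == b')).

Definition in_game_m n (g : game n) (a : 'I_n) : bool := (gm1 g == a) || (gm2 g == a).
Definition in_game_w n (g : game n) (b : 'I_n) : bool := (gf1 g == b) || (gf2 g == b).

Definition spouse_matching n (S : {set 'I_n * 'I_n}) : Prop :=
  forall p q, p \in S -> q \in S -> (p.1 = q.1 \/ p.2 = q.2) -> p = q.

Definition has_spouse_m n (S : {set 'I_n * 'I_n}) (a : 'I_n) : bool :=
  [exists b, (a, b) \in S].
Definition has_spouse_w n (S : {set 'I_n * 'I_n}) (b : 'I_n) : bool :=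
  [exists a, (a, b) \in S].

Definition is_CMDRR (n k : nat) (sched : seq (game n)) (S : {set 'I_n * 'I_n}) : Prop :=
  [/\ (spouse_matching S /\ #|S| = k),
      (forall g, g \in sched -> gm1 g != gm2 g /\ gf1 g != gf2 g),
      (forall g a b, g \in sched -> (a, b) \in S ->
          ~~ (in_game_m g a && in_game_w g b)),
      (forall a b, (a, b) \notin S ->
          count (fun g => partners g a b) sched = 1 /\
          count (fun g => opp_mw g a b) sched = 1) &
      (((forall a, has_spouse_m S a ->
          forall a', a' != a -> count (fun g => opp_mm g a a') sched = 1) /\
      (forall a, ~~ has_spouse_m S a ->
          exists a', [/\ a' != a, ~~ has_spouse_m S a',
             count (fun g => opp_mm g a a') sched = 2 &
             forall a'', a'' != a -> a'' != a' ->
               count (fun g => opp_mm g a a'') sched = 1])) /\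
      ((forall b, has_spouse_w S b ->
          forall b', b' != b -> count (fun g => opp_ww g b b') sched = 1) /\
      (forall b, ~~ has_spouse_w S b ->
          exists b', [/\ b' != b, ~~ has_spouse_w S b',
             count (fun g => opp_ww g b b') sched = 2 &
             forall b'', b'' != b -> b'' != b' ->
               count (fun g => opp_ww g b b'') sched = 1])))].

Definition CMDRR_exists (n k : nat) : Prop :=
  exists (sched : seq (game n)) (S : {set 'I_n * 'I_n}), @is_CMDRR n k sched S.

(* L is an HSOLS of order n whose holes are indexed by T, hole t having size
   sz t; [hole x] is the hole containing row/column/symbol x. Empty cells are None. *)
Definition is_HSOLS (n : nat) (T : finType) (sz : T -> nat) (hole : 'I_n -> T)
    (L : 'I_n -> 'I_n -> option 'I_n) : Prop :=
  [/\ (forall t, #|[set x | hole x == t]| = sz t),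
      (forall r c, (L r c == None) = (hole r == hole c)),
      (* row r contains each symbol outside the hole of r exactly once,
         and no symbol of its own hole *)
      (forall r x, #|[set c | L r c == Some x]| = (hole x != hole r)),
      (forall c x, #|[set r | L r c == Some x]| = (hole x != hole c)) &
      (* orthogonal to its transpose: superimposing L and L^T, every ordered pair
         of symbols from distinct holes occurs exactly once (and no other pair) *)
      (forall x y, #|[set rc : 'I_n * 'I_n |
                      (L rc.1 rc.2 == Some x) && (L rc.2 rc.1 == Some y)]|
                   = (hole x != hole y))].

Definition HSOLS_exists (n : nat) (T : finType) (sz : T -> nat) : Prop :=
  exists hole L, @is_HSOLS n T sz hole L.

From mathcomp Require Import all_boot.
From Stdlib Require Import ClassicalEpsilon.
Set Implicit Arguments. Unset Strict Implicit. Unset Printing Implicit Defensive.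

(* Number the players of the big tournament by the rows of the HSOLS L.  For
   every pair of rows r < c lying in different holes, play the game
   M_r F_(L r c)  v  M_c F_(L c r).  Since each row and each column of L
   contains every symbol outside its own hole exactly once, and L is
   orthogonal to its transpose, these games make every two players from
   different holes partners once and opponents once; players of a common
   hole never meet.  Inside each hole of size h_i play a CMDRR(h_i, m_ij)
   with its own spouse pairs; the spouse pairs of the whole tournament are
   the union of those of the holes. *)

Lemma count0_in (X : eqType) (s : seq X) (P : pred X) :
  (forall y, y \in s -> ~~ P y) -> count P s = 0.
Proof. by move=> notP; apply/eqP; rewrite -leqn0 leqNgt -has_count; apply/hasPn. Qed.

Lemma count1_in (X : eqType) (s : seq X) (P : pred X) x :
  uniq s -> x \in s -> P x -> (forall y, y \in s -> P y -> y = x) ->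
  count P s = 1.
Proof.
move=> s_uniq xs Px Px_uniq.
have -> : count P s = count (pred1 x) s.
  by apply: eq_in_count => y ys /=; apply/idP/eqP => [|->]; first exact: Px_uniq.
by rewrite count_uniq_mem // xs.
Qed.

Ltac unfold_game := rewrite /partners /opp_mw /opp_mm /opp_ww /gm1 /gf1 /gm2 /gf2 /=.

Section HSOLSGames.

Variables (n : nat) (T : finType) (sz : T -> nat) (hole : 'I_n -> T)
  (L : 'I_n -> 'I_n -> option 'I_n).
Hypothesis HL : is_HSOLS sz hole L.

Lemma hsols_filled r c : hole r != hole c -> exists x, L r c = Some x.
Proof.
case: HL => _ L_None _ _ _ hrc; move: (L_None r c); rewrite (negbTE hrc).
by case: (L r c) => // x _; exists x.
Qed.

Lemma hsols_entry_holes r c x : L r c = Some x ->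
  [/\ hole x != hole r, hole x != hole c & hole r != hole c].
Proof.
case: HL => _ L_None L_row L_col _ Lrc; split.
- have : 0 < #|[set c' | L r c' == Some x]|.
    by apply/card_gt0P; exists c; rewrite inE Lrc.
  by rewrite L_row; case: (_ != _).
- have : 0 < #|[set r' | L r' c == Some x]|.
    by apply/card_gt0P; exists r; rewrite inE Lrc.
  by rewrite L_col; case: (_ != _).
- by rewrite -L_None Lrc.
Qed.

Lemma hsols_transpose_holes r c x y :
  L r c = Some x -> L c r = Some y -> hole x != hole y.
Proof.
case: HL => _ _ _ _ L_orth Lrc Lcr.
have : 0 < #|[set rc : 'I_n * 'I_n |
               (L rc.1 rc.2 == Some x) && (L rc.2 rc.1 == Some y)]|.
  by apply/card_gt0P; exists (r, c); rewrite inE /= Lrc Lcr !eqxx.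
by rewrite L_orth; case: (_ != _).
Qed.

Lemma hsols_row_unique r x : hole x != hole r ->
  exists c, forall c', (L r c' == Some x) = (c' == c).
Proof.
case: HL => _ _ L_row _ _ hxr; move: (L_row r x); rewrite hxr => /eqP/cards1P [c E].
by exists c => c'; move/setP: E => /(_ c'); rewrite !inE.
Qed.

Lemma hsols_col_unique c x : hole x != hole c ->
  exists r, forall r', (L r' c == Some x) = (r' == r).
Proof.
case: HL => _ _ _ L_col _ hxc; move: (L_col c x); rewrite hxc => /eqP/cards1P [r E].
by exists r => r'; move/setP: E => /(_ r'); rewrite !inE.
Qed.

Lemma hsols_pair_unique x y : hole x != hole y ->
  exists r c, forall r' c',
    ((L r' c' == Some x) && (L c' r' == Some y)) = ((r' == r) && (c' == c)).
Proof.
case: HL => _ _ _ _ L_orth hxy; move: (L_orth x y); rewrite hxy.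
move=> /eqP/cards1P [[r c] E]; exists r, c => r' c'.
by move/setP: E => /(_ (r', c')); rewrite !inE /= xpair_eqE.
Qed.

(* The default [rc.1] is never used: [hsols_games] only takes cells off the holes. *)
Definition hsols_game (rc : 'I_n * 'I_n) : game n :=
  (rc.1, odflt rc.1 (L rc.1 rc.2), rc.2, odflt rc.1 (L rc.2 rc.1)).

Definition hsols_games : seq (game n) :=
  [seq hsols_game rc | rc <- enum [pred rc : 'I_n * 'I_n |
                                    (rc.1 < rc.2) && (hole rc.1 != hole rc.2)]].

Lemma uniq_hsols_games : uniq hsols_games.
Proof.
rewrite map_inj_uniq ?enum_uniq //.
by move=> [r c] [r' c']; rewrite /hsols_game /= => -[-> _ -> _].
Qed.

Lemma mem_hsols_games g : g \in hsols_games -> exists r c x y : 'I_n,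
  [/\ r < c, L r c = Some x, L c r = Some y & g = (r, x, c, y)].
Proof.
case/mapP => -[r c]; rewrite mem_enum inE /= => /andP [rc hrc] ->.
have [x Lrc] := hsols_filled hrc.
have [y Lcr] : exists y, L c r = Some y by apply: hsols_filled; rewrite eq_sym.
by exists r, c, x, y; rewrite /hsols_game /= Lrc Lcr.
Qed.

Lemma hsols_games_in r c x y : L r c = Some x -> L c r = Some y -> r < c ->
  ((r, x, c, y) : game n) \in hsols_games.
Proof.
move=> Lrc Lcr rc; apply/mapP; exists (r, c); last by rewrite /hsols_game /= Lrc Lcr.
by rewrite mem_enum inE /= rc; case: (hsols_entry_holes Lrc).
Qed.

(* A predicate invariant under swapping the two teams holds in exactly one
   game as soon as it singles out one unordered pair of cells {rc, cr}. *)
Lemma count_hsols_games1 (P : pred (game n)) r0 c0 x0 y0 :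
  (forall r c x y, P (r, x, c, y) = P (c, y, r, x)) ->
  L r0 c0 = Some x0 -> L c0 r0 = Some y0 -> P (r0, x0, c0, y0) ->
  (forall r c x y, L r c = Some x -> L c r = Some y -> P (r, x, c, y) ->
     (r, c) = (r0, c0) \/ (r, c) = (c0, r0)) ->
  count P hsols_games = 1.
Proof.
move=> P_swap Lrc0 Lcr0 P0 P_uniq.
have [_ _ /negP hrc0] := hsols_entry_holes Lrc0.
case: (ltngtP r0 c0) => [lt0 | lt0 | /val_inj e0]; last by rewrite e0 eqxx in hrc0.
- apply: (@count1_in _ _ _ (r0, x0, c0, y0)) => //.
  + exact: uniq_hsols_games.
  + exact: hsols_games_in.
  move=> g /mem_hsols_games [r [c [x [y [rc Lrc Lcr ->]]]]] Pg.
  case: (P_uniq _ _ _ _ Lrc Lcr Pg) => -[er ec]; subst r c.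
    by move: Lrc Lcr; rewrite Lrc0 Lcr0 => -[->] [->].
  by move: (ltn_trans rc lt0); rewrite ltnn.
- apply: (@count1_in _ _ _ (c0, y0, r0, x0)) => //.
  + exact: uniq_hsols_games.
  + exact: hsols_games_in.
  + by rewrite -P_swap.
  move=> g /mem_hsols_games [r [c [x [y [rc Lrc Lcr ->]]]]] Pg.
  case: (P_uniq _ _ _ _ Lrc Lcr Pg) => -[er ec]; subst r c.
    by move: (ltn_trans rc lt0); rewrite ltnn.
  by move: Lrc Lcr; rewrite Lrc0 Lcr0 => -[->] [->].
Qed.

Lemma count_hsols_games0 (P : pred (game n)) :
  (forall r c x y, L r c = Some x -> L c r = Some y -> ~~ P (r, x, c, y)) ->
  count P hsols_games = 0.
Proof.
move=> notP; apply: count0_in => g /mem_hsols_games [r [c [x [y [_ Lrc Lcr ->]]]]].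
exact: notP.
Qed.

Lemma count_hsols_partners a b :
  count (fun g => partners g a b) hsols_games = (hole a != hole b).
Proof.
have [hab | hab] /= := eqVneq (hole a) (hole b).
  apply: count_hsols_games0 => r c x y Lrc Lcr; unfold_game.
  have [hxr _ _] := hsols_entry_holes Lrc; have [hyc _ _] := hsols_entry_holes Lcr.
  apply/negP => /orP [] /andP [/eqP er /eqP ex]; subst.
    by rewrite hab eqxx in hxr.
  by rewrite hab eqxx in hyc.
have [c0 row_a] : exists c0, forall c', (L a c' == Some b) = (c' == c0).
  by apply: hsols_row_unique; rewrite eq_sym.
have Lac0 : L a c0 = Some b by apply/eqP; rewrite row_a.
have [_ _ hac0] := hsols_entry_holes Lac0.
have [y0 Lc0a] : exists y0, L c0 a = Some y0 by apply: hsols_filled; rewrite eq_sym.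
apply: (count_hsols_games1 (r0 := a) (c0 := c0) (x0 := b) (y0 := y0)) => //.
- by move=> r c x y; unfold_game; rewrite orbC.
- by unfold_game; rewrite !eqxx.
move=> r c x y Lrc Lcr; unfold_game.
case/orP => /andP [/eqP er /eqP ex]; subst.
  by left; move: (row_a c); rewrite Lrc eqxx => /esym/eqP ->.
by right; move: (row_a r); rewrite Lcr eqxx => /esym/eqP ->.
Qed.

Lemma count_hsols_opp_mw a b :
  count (fun g => opp_mw g a b) hsols_games = (hole a != hole b).
Proof.
have [hab | hab] /= := eqVneq (hole a) (hole b).
  apply: count_hsols_games0 => r c x y Lrc Lcr; unfold_game.
  have [_ hxc _] := hsols_entry_holes Lrc; have [_ hyr _] := hsols_entry_holes Lcr.
  apply/negP => /orP [] /andP [/eqP er /eqP ex]; subst.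
    by rewrite hab eqxx in hyr.
  by rewrite hab eqxx in hxc.
have [r0 col_a] : exists r0, forall r', (L r' a == Some b) = (r' == r0).
  by apply: hsols_col_unique; rewrite eq_sym.
have Lr0a : L r0 a = Some b by apply/eqP; rewrite col_a.
have [_ _ hr0a] := hsols_entry_holes Lr0a.
have [x0 Lar0] : exists x0, L a r0 = Some x0 by apply: hsols_filled; rewrite eq_sym.
apply: (count_hsols_games1 (r0 := a) (c0 := r0) (x0 := x0) (y0 := b)) => //.
- by move=> r c x y; unfold_game; rewrite orbC.
- by unfold_game; rewrite !eqxx.
move=> r c x y Lrc Lcr; unfold_game.
case/orP => /andP [/eqP er /eqP ex]; subst.
  by left; move: (col_a c); rewrite Lcr eqxx => /esym/eqP ->.
by right; move: (col_a r); rewrite Lrc eqxx => /esym/eqP ->.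
Qed.

Lemma count_hsols_opp_mm a a' :
  count (fun g => opp_mm g a a') hsols_games = (hole a != hole a').
Proof.
have [haa' | haa'] /= := eqVneq (hole a) (hole a').
  apply: count_hsols_games0 => r c x y Lrc Lcr; unfold_game.
  have [_ _ hrc] := hsols_entry_holes Lrc.
  by apply/negP => /orP [] /andP [/eqP er /eqP ec]; subst; rewrite haa' eqxx in hrc.
have [x0 Laa'] := hsols_filled haa'.
have [y0 La'a] : exists y0, L a' a = Some y0 by apply: hsols_filled; rewrite eq_sym.
apply: (count_hsols_games1 (r0 := a) (c0 := a') (x0 := x0) (y0 := y0)) => //.
- by move=> r c x y; unfold_game; rewrite orbC.
- by unfold_game; rewrite !eqxx.
move=> r c x y _ _; unfold_game.
by case/orP => /andP [/eqP er /eqP ec]; subst; [left | right].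
Qed.

Lemma count_hsols_opp_ww b b' :
  count (fun g => opp_ww g b b') hsols_games = (hole b != hole b').
Proof.
have [hbb' | hbb'] /= := eqVneq (hole b) (hole b').
  apply: count_hsols_games0 => r c x y Lrc Lcr; unfold_game.
  have hxy := hsols_transpose_holes Lrc Lcr.
  by apply/negP => /orP [] /andP [/eqP ex /eqP ey]; subst; rewrite hbb' eqxx in hxy.
have [r0 [c0 cell_bb']] := hsols_pair_unique hbb'.
have /andP [/eqP Lr0c0 /eqP Lc0r0] : (L r0 c0 == Some b) && (L c0 r0 == Some b').
  by rewrite cell_bb' !eqxx.
apply: (count_hsols_games1 (r0 := r0) (c0 := c0) (x0 := b) (y0 := b')) => //.
- by move=> r c x y; unfold_game; rewrite orbC.
- by unfold_game; rewrite !eqxx.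
move=> r c x y Lrc Lcr; unfold_game.
case/orP => /andP [/eqP ex /eqP ey]; subst.
  by left; move: (cell_bb' r c); rewrite Lrc Lcr !eqxx => /esym/andP [/eqP -> /eqP ->].
by right; move: (cell_bb' c r); rewrite Lrc Lcr !eqxx => /esym/andP [/eqP -> /eqP ->].
Qed.

Lemma hsols_games_distinct g :
  g \in hsols_games -> gm1 g != gm2 g /\ gf1 g != gf2 g.
Proof.
case/mem_hsols_games => r [c [x [y [rc Lrc Lcr ->]]]]; rewrite /gm1 /gm2 /gf1 /gf2 /=.
split; first by rewrite neq_ltn rc.
by apply: contraNneq (hsols_transpose_holes Lrc Lcr) => ->.
Qed.

Lemma hsols_games_same_hole g a b : g \in hsols_games -> hole a = hole b ->
  ~~ (in_game_m g a && in_game_w g b).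
Proof.
case/mem_hsols_games => r [c [x [y [_ Lrc Lcr ->]]]] hab.
rewrite /in_game_m /in_game_w /gm1 /gm2 /gf1 /gf2 /=.
have [hxr hxc _] := hsols_entry_holes Lrc; have [hyc hyr _] := hsols_entry_holes Lcr.
apply/negP => /andP [/orP [] /eqP ea /orP [] /eqP eb]; subst;
  by rewrite hab eqxx in hxr hxc hyc hyr.
Qed.

End HSOLSGames.

Definition same_sex_balanced n (has_spouse : pred 'I_n) (cnt : 'I_n -> 'I_n -> nat) :=
  (forall a, has_spouse a -> forall a', a' != a -> cnt a a' = 1) /\
  (forall a, ~~ has_spouse a -> exists a', [/\ a' != a, ~~ has_spouse a', cnt a a' = 2 &
      forall a'', a'' != a -> a'' != a' -> cnt a a'' = 1]).

Section HoleGames.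

Variables (n : nat) (T : finType) (sz : T -> nat) (hole : 'I_n -> T).
Local Unset Implicit Arguments.
Variable emb : forall t, 'I_(sz t) -> 'I_n.
Local Set Implicit Arguments.
Hypothesis emb_hole : forall t u, hole (emb t u) = t.
Hypothesis emb_inj : forall t, injective (emb t).
Hypothesis emb_onto : forall t x, hole x = t -> exists u, emb t u = x.
Variables (sch : forall t, seq (game (sz t)))
  (spouses : forall t, {set 'I_(sz t) * 'I_(sz t)}).

Definition embed_game t (g : game (sz t)) : game n :=
  (emb t (gm1 g), emb t (gf1 g), emb t (gm2 g), emb t (gf2 g)).

Definition hole_games : seq (game n) :=
  flatten [seq map (@embed_game t) (sch t) | t <- enum T].

Definition hole_spouses : {set 'I_n * 'I_n} :=
  \bigcup_(t : T) [set (emb t p.1, emb t p.2) | p in spouses t].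

Lemma emb_ind (Q : 'I_n -> Prop) : (forall t u, Q (emb t u)) -> forall a, Q a.
Proof. by move=> Qemb a; have [u <-] := emb_onto (erefl (hole a)); apply: Qemb. Qed.

Lemma emb_eqF t t' u v : t' != t -> (emb t' u == emb t v) = false.
Proof.
move=> t't; apply/negbTE; apply: contra t't => /eqP /(congr1 hole).
by rewrite !emb_hole => ->.
Qed.

Lemma count_hole_games (P : pred (game n)) :
  count P hole_games = \sum_(t <- enum T) count (fun g => P (embed_game g)) (sch t).
Proof.
rewrite count_flatten sumnE !big_map; apply: eq_bigr => t _.
by rewrite count_map.
Qed.

Lemma mem_hole_games g :
  g \in hole_games -> exists t g0, g0 \in sch t /\ g = embed_game g0.
Proof. by case/flattenP => s /mapP [t _ ->] /mapP [g0 g0s ->]; exists t, g0. Qed.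

(* [Q] ranges over the four incidence relations [partners], [opp_mw],
   [opp_mm] and [opp_ww], which are defined uniformly in the size. *)
Lemma count_hole_games_same (Q : forall m, game m -> 'I_m -> 'I_m -> bool) t u v :
  (forall t g u v, Q n (embed_game g) (emb t u) (emb t v) = Q (sz t) g u v) ->
  (forall t t' g u v, t' != t -> Q n (@embed_game t' g) (emb t u) (emb t v) = false) ->
  count (fun g => Q n g (emb t u) (emb t v)) hole_games
  = count (fun g => Q _ g u v) (sch t).
Proof.
move=> Q_same Q_cross; rewrite count_hole_games (bigD1_seq t) ?mem_enum ?enum_uniq //=.
rewrite big1_seq ?addn0; first by apply: eq_count => g; rewrite Q_same.
by move=> t' /andP [t't _]; apply: count0_in => g _; rewrite Q_cross.
Qed.

Lemma count_hole_games_cross (Q : forall m, game m -> 'I_m -> 'I_m -> bool) a b :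
  (forall t g a b, hole a != hole b -> Q n (@embed_game t g) a b = false) ->
  hole a != hole b -> count (fun g => Q n g a b) hole_games = 0.
Proof.
move=> Q_cross hab; rewrite count_hole_games big1_seq // => t _.
by apply: count0_in => g _; rewrite Q_cross.
Qed.

Ltac embed_same := move=> ? ? ? ?; rewrite /embed_game; unfold_game;
  rewrite !(inj_eq (@emb_inj _)).
Ltac embed_cross := move=> ? ? ? ? ? ?; rewrite /embed_game; unfold_game;
  rewrite !emb_eqF.
Ltac embed_cross_holes := move=> ? ? ? ?; rewrite /embed_game; unfold_game;
  apply: contraNF => /orP [] /andP [/eqP <- /eqP <-]; rewrite !emb_hole.

Lemma count_hole_partners t u v :
  count (fun g => partners g (emb t u) (emb t v)) hole_games
  = count (fun g => partners g u v) (sch t).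
Proof. by apply: (count_hole_games_same (Q := partners)); [embed_same | embed_cross]. Qed.

Lemma count_hole_opp_mw t u v :
  count (fun g => opp_mw g (emb t u) (emb t v)) hole_games
  = count (fun g => opp_mw g u v) (sch t).
Proof. by apply: (count_hole_games_same (Q := opp_mw)); [embed_same | embed_cross]. Qed.

Lemma count_hole_opp_mm t u v :
  count (fun g => opp_mm g (emb t u) (emb t v)) hole_games
  = count (fun g => opp_mm g u v) (sch t).
Proof. by apply: (count_hole_games_same (Q := opp_mm)); [embed_same | embed_cross]. Qed.

Lemma count_hole_opp_ww t u v :
  count (fun g => opp_ww g (emb t u) (emb t v)) hole_games
  = count (fun g => opp_ww g u v) (sch t).
Proof. by apply: (count_hole_games_same (Q := opp_ww)); [embed_same | embed_cross]. Qed.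

Lemma count_hole_partners_cross a b :
  hole a != hole b -> count (fun g => partners g a b) hole_games = 0.
Proof. by apply: (count_hole_games_cross (Q := partners)); embed_cross_holes. Qed.

Lemma count_hole_opp_mw_cross a b :
  hole a != hole b -> count (fun g => opp_mw g a b) hole_games = 0.
Proof. by apply: (count_hole_games_cross (Q := opp_mw)); embed_cross_holes. Qed.

Lemma count_hole_opp_mm_cross a b :
  hole a != hole b -> count (fun g => opp_mm g a b) hole_games = 0.
Proof. by apply: (count_hole_games_cross (Q := opp_mm)); embed_cross_holes. Qed.

Lemma count_hole_opp_ww_cross a b :
  hole a != hole b -> count (fun g => opp_ww g a b) hole_games = 0.
Proof. by apply: (count_hole_games_cross (Q := opp_ww)); embed_cross_holes. Qed.

Lemma mem_hole_spouses p : p \in hole_spouses ->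
  exists t (u v : 'I_(sz t)), (u, v) \in spouses t /\ p = (emb t u, emb t v).
Proof. by case/bigcupP => t _ /imsetP [[u v] uv ->]; exists t, u, v. Qed.

Lemma hole_spouses_emb t u v :
  ((emb t u, emb t v) \in hole_spouses) = ((u, v) \in spouses t).
Proof.
apply/idP/idP => [|uv]; last by apply/bigcupP; exists t => //; apply/imsetP; exists (u, v).
case/mem_hole_spouses => t' [u' [v' [uv' [E1 E2]]]].
have e_t : t' = t by have := congr1 hole E1; rewrite !emb_hole.
by subst t'; move/emb_inj: E1 => ->; move/emb_inj: E2 => ->.
Qed.

Lemma hole_spouses_same_hole p : p \in hole_spouses -> hole p.1 = hole p.2.
Proof. by case/mem_hole_spouses => t [u [v [_ ->]]] /=; rewrite !emb_hole. Qed.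

Lemma has_spouse_m_emb t u :
  has_spouse_m hole_spouses (emb t u) = has_spouse_m (spouses t) u.
Proof.
apply/existsP/existsP => [[b]|[v uv]]; last by exists (emb t v); rewrite hole_spouses_emb.
case/mem_hole_spouses => t' [u' [v' [uv' [E1 _]]]].
have e_t : t' = t by have := congr1 hole E1; rewrite !emb_hole.
by subst t'; move/emb_inj: E1 => ->; exists v'.
Qed.

Lemma has_spouse_w_emb t v :
  has_spouse_w hole_spouses (emb t v) = has_spouse_w (spouses t) v.
Proof.
apply/existsP/existsP => [[a]|[u uv]]; last by exists (emb t u); rewrite hole_spouses_emb.
case/mem_hole_spouses => t' [u' [v' [uv' [_ E2]]]].
have e_t : t' = t by have := congr1 hole E2; rewrite !emb_hole.
by subst t'; move/emb_inj: E2 => ->; exists u'.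
Qed.

Lemma card_hole_spouses : #|hole_spouses| = \sum_t #|spouses t|.
Proof.
rewrite -sum1_card /hole_spouses partition_disjoint_bigcup.
  apply: eq_bigr => t _; rewrite sum1_card card_imset //.
  by move=> [u v] [u' v'] /= [] /emb_inj -> /emb_inj ->.
move=> t t' tt'; rewrite disjoint_subset; apply/subsetP => p /imsetP [q _ ->].
rewrite inE; apply/imsetP => -[q' _ [E _]].
by move: tt'; rewrite -(emb_hole q.1) E emb_hole eqxx.
Qed.

Lemma hole_spouses_matching :
  (forall t, spouse_matching (spouses t)) -> spouse_matching hole_spouses.
Proof.
move=> match_t p q /mem_hole_spouses [t [u [v [uv ->]]]].
case/mem_hole_spouses => t' [u' [v' [uv' ->]]] /= E.
have e_t : t' = t by case: E => /(congr1 hole); rewrite !emb_hole.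
subst t'; suff /(match_t t _ _ uv uv') [-> ->] : u = u' \/ v = v' by [].
by case: E => /emb_inj E; [left | right].
Qed.

Lemma same_sex_balanced_emb (cnt : 'I_n -> 'I_n -> nat)
    (cnt_hole : forall t, 'I_(sz t) -> 'I_(sz t) -> nat)
    (has_spouse : pred 'I_n) (has_spouse_hole : forall t, pred 'I_(sz t)) :
  (forall a b, hole a != hole b -> cnt a b = 1) ->
  (forall t u v, cnt (emb t u) (emb t v) = cnt_hole t u v) ->
  (forall t u, has_spouse (emb t u) = has_spouse_hole t u) ->
  (forall t, same_sex_balanced (has_spouse_hole t) (cnt_hole t)) ->
  same_sex_balanced has_spouse cnt.
Proof.
move=> cnt_cross cnt_emb hs_emb bal_hole; split.
  apply: emb_ind => t u; rewrite hs_emb => hs_u a'.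
  have [/eqP|hdiff _] := eqVneq (hole (emb t u)) (hole a'); last exact: cnt_cross.
  rewrite emb_hole eq_sym => /eqP/emb_onto [u' <-].
  by rewrite (inj_eq (@emb_inj t)) cnt_emb; apply: (proj1 (bal_hole t)).
apply: emb_ind => t u; rewrite hs_emb => hs_u.
have [u' [u'u hs_u' cnt2 cnt1]] := proj2 (bal_hole t) u hs_u.
exists (emb t u'); split; rewrite ?hs_emb ?cnt_emb ?(inj_eq (@emb_inj _)) // => a''.
have [/eqP|hdiff _ _] := eqVneq (hole (emb t u)) (hole a''); last exact: cnt_cross.
rewrite emb_hole eq_sym => /eqP/emb_onto [w <-].
by rewrite !(inj_eq (@emb_inj t)) cnt_emb; apply: cnt1.
Qed.

End HoleGames.

Section Combination.

Variables (n : nat) (T : finType) (sz : T -> nat) (hole : 'I_n -> T)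
  (L : 'I_n -> 'I_n -> option 'I_n).
Hypothesis HL : is_HSOLS sz hole L.
Local Unset Implicit Arguments.
Variable emb : forall t, 'I_(sz t) -> 'I_n.
Local Set Implicit Arguments.
Hypothesis emb_hole : forall t u, hole (emb t u) = t.
Hypothesis emb_inj : forall t, injective (emb t).
Hypothesis emb_onto : forall t x, hole x = t -> exists u, emb t u = x.
Variables (sch : forall t, seq (game (sz t)))
  (spouses : forall t, {set 'I_(sz t) * 'I_(sz t)}) (mm : T -> nat).
Hypothesis Hsch : forall t, is_CMDRR (mm t) (sch t) (spouses t).

Local Notation sched := (hsols_games hole L ++ hole_games emb sch).
Local Notation S := (hole_spouses emb spouses).

Lemma combined_players_distinct g : g \in sched -> gm1 g != gm2 g /\ gf1 g != gf2 g.
Proof.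
rewrite mem_cat => /orP [|/mem_hole_games [t [g0 [g0s ->]]]].
  exact: hsols_games_distinct HL g.
have [_ distinct_t _ _ _] := Hsch t; have [] := distinct_t _ g0s.
by rewrite /embed_game /gm1 /gm2 /gf1 /gf2 /= !(inj_eq (@emb_inj _)).
Qed.

Lemma combined_spouses_apart g a b : g \in sched -> (a, b) \in S ->
  ~~ (in_game_m g a && in_game_w g b).
Proof.
rewrite mem_cat => /orP [gH ab|/mem_hole_games [t' [g0 [g0s ->]]]].
  exact: (hsols_games_same_hole HL gH (hole_spouses_same_hole emb_hole ab)).
case/(mem_hole_spouses (emb := emb)) => t [u [v [uv [-> ->]]]].
rewrite /embed_game /in_game_m /in_game_w /gm1 /gm2 /gf1 /gf2 /=.
have [e_t|t't] := eqVneq t' t; last by rewrite !(emb_eqF emb_hole).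
subst t'; have [_ _ apart_t _ _] := Hsch t; have := apart_t _ _ _ g0s uv.
by rewrite /in_game_m /in_game_w /gm1 /gm2 /gf1 /gf2 /= !(inj_eq (@emb_inj _)).
Qed.

Lemma combined_mixed_counts a b : (a, b) \notin S ->
  count (fun g => partners g a b) sched = 1 /\ count (fun g => opp_mw g a b) sched = 1.
Proof.
rewrite !count_cat (count_hsols_partners HL) (count_hsols_opp_mw HL).
have [hab|hab] := eqVneq (hole a) (hole b); last first.
  by rewrite (count_hole_partners_cross emb_hole) ?(count_hole_opp_mw_cross emb_hole).
move: a b hab; apply: (emb_ind emb_onto) => t u b.
rewrite emb_hole => /esym/emb_onto [v <-].
rewrite (hole_spouses_emb emb_hole emb_inj) (count_hole_partners emb_hole emb_inj).
rewrite (count_hole_opp_mw emb_hole emb_inj) /=.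
by have [_ _ _ mixed_t _] := Hsch t; apply: mixed_t.
Qed.

Lemma combined_men_balanced :
  same_sex_balanced (has_spouse_m S) (fun a a' => count (fun g => opp_mm g a a') sched).
Proof.
apply: (same_sex_balanced_emb emb_hole emb_inj emb_onto
  (cnt_hole := fun t u v => count (fun g => opp_mm g u v) (sch t))
  (has_spouse_hole := fun t => has_spouse_m (spouses t))) => [a b hab|t u v|t u|t] /=.
- by rewrite count_cat (count_hsols_opp_mm HL) (count_hole_opp_mm_cross emb_hole) ?hab.
- rewrite count_cat (count_hsols_opp_mm HL) (count_hole_opp_mm emb_hole emb_inj).
  by rewrite !emb_hole eqxx.
- exact: (has_spouse_m_emb emb_hole emb_inj).
- by have [_ _ _ _ [men_t _]] := Hsch t.
Qed.

Lemma combined_women_balanced :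
  same_sex_balanced (has_spouse_w S) (fun b b' => count (fun g => opp_ww g b b') sched).
Proof.
apply: (same_sex_balanced_emb emb_hole emb_inj emb_onto
  (cnt_hole := fun t u v => count (fun g => opp_ww g u v) (sch t))
  (has_spouse_hole := fun t => has_spouse_w (spouses t))) => [a b hab|t u v|t u|t] /=.
- by rewrite count_cat (count_hsols_opp_ww HL) (count_hole_opp_ww_cross emb_hole) ?hab.
- rewrite count_cat (count_hsols_opp_ww HL) (count_hole_opp_ww emb_hole emb_inj).
  by rewrite !emb_hole eqxx.
- exact: (has_spouse_w_emb emb_hole emb_inj).
- by have [_ _ _ _ [_ women_t]] := Hsch t.
Qed.

Lemma combined_CMDRR : is_CMDRR (\sum_t mm t) sched S.
Proof.
split.
- split; first by apply: (hole_spouses_matching emb_hole emb_inj) => t; case: (Hsch t) => -[].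
  rewrite (card_hole_spouses emb_hole emb_inj); apply: eq_bigr => t _.
  by case: (Hsch t) => -[].
- exact: combined_players_distinct.
- by move=> g a b; apply: combined_spouses_apart.
- exact: combined_mixed_counts.
- exact: (conj combined_men_balanced combined_women_balanced).
Qed.

End Combination.

Lemma CMDRR_exists_from_HSOLS n (T : finType) (sz mm : T -> nat) :
  HSOLS_exists n sz -> (forall t, CMDRR_exists (sz t) (mm t)) ->
  CMDRR_exists n (\sum_t mm t).
Proof.
case=> hole [L HL] hole_CMDRR.
have card_hole t : #|[set x | hole x == t]| = sz t by case: HL.
pose emb t (u : 'I_(sz t)) : 'I_n :=
  enum_val (cast_ord (esym (card_hole t)) u : 'I_#|[set x | hole x == t]|).
have emb_hole t u : hole (emb t u) = t.
  by have := enum_valP (cast_ord (esym (card_hole t)) u); rewrite inE => /eqP.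
have emb_inj t : injective (emb t) by move=> u v /enum_val_inj /cast_ord_inj.
have emb_onto t x : hole x = t -> exists u, emb t u = x.
  move=> hx; have x_t : x \in [set x | hole x == t] by rewrite inE hx.
  by exists (cast_ord (card_hole t) (enum_rank_in x_t x)); rewrite /emb cast_ordK enum_rankK_in.
have tournament t : {p : seq (game (sz t)) * {set 'I_(sz t) * 'I_(sz t)} |
                     is_CMDRR (mm t) p.1 p.2}.
  by apply: constructive_indefinite_description; have [s [S ?]] := hole_CMDRR t; exists (s, S).
exists (hsols_games hole L ++ hole_games emb (fun t => (sval (tournament t)).1)).
exists (hole_spouses emb (fun t => (sval (tournament t)).2)).
by apply: (combined_CMDRR HL emb_hole emb_inj emb_onto) => t; exact: (svalP (tournament t)).
Qed.

Lemma sum_tag (k : nat) (nn : 'I_k -> nat) (m : forall i : 'I_k, 'I_(nn i) -> nat) :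
  \sum_(p : {i : 'I_k & 'I_(nn i)}) m (tag p) (tagged p)
  = \sum_(i < k) \sum_(j < nn i) m i j.
Proof.
rewrite (partition_big (fun p => tag p) predT) //=; apply: eq_bigr => i _.
rewrite (big_tag (fun i j => m i j)); apply: eq_big => [p|[i' j] /eqP e_i] //.
by rewrite (untagE _ _ e_i); case: i / e_i.
Qed.

Theorem theorem1 (k : nat) (h nn : 'I_k -> nat)
    (m : forall i : 'I_k, 'I_(nn i) -> nat) :
  HSOLS_exists (\sum_(i < k) nn i * h i)
    (fun p : {i : 'I_k & 'I_(nn i)} => h (tag p)) ->
  (forall (i : 'I_k) (j : 'I_(nn i)), CMDRR_exists (h i) (m i j)) ->
  CMDRR_exists (\sum_(i < k) nn i * h i)
    (\sum_(i < k) \sum_(j < nn i) m i j).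
Proof.
move=> HSOLS_h CMDRR_m; rewrite -sum_tag.
by apply: (CMDRR_exists_from_HSOLS HSOLS_h) => -[i j]; apply: CMDRR_m.
Qed.
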